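(* Consider the two-parameter model below in the spin-$1/2$ (qubit) representation, $J_k=\sigma_k/2$, with arbitrary pure initial state $|\psi_0\rangle$ with Bloch vector $\mathbf r_0$ ($|\mathbf r_0|=1$). Then $\det\boldsymbol{\mathcal Q}=\det\boldsymbol{\mathcal D}=4t^2\sin^2\tfrac{Bt}{2}\,(\mathbf n_2\cdot\mathbf r_0)^2$. In particular, the Uhlmann matrix vanishes exactly when the QFIM is singular (for $t\sin\frac{Bt}{2}\ne0$), and whenever the QFIM is invertible the asymptotic incompatibility equals $\mathcal R=1$, for all values of $B,\theta,t$ and every pure initial state.
   Context: Fix $t\in\mathbb R$, let $H=B(\cos\theta J_x+\sin\theta J_z)$, $U=e^{-itH}$, $|\psi_{B,\theta}\rangle=U|\psi_0\rangle$. Let $\mathbf n_\theta=(\cos\theta,0,\sin\theta)$, $\mathbf n_1=(\cos\frac{Bt}{2}\sin\theta,-\sin\frac{Bt}{2},-\cos\frac{Bt}{2}\cos\theta)$, $\mathbf n_2=\mathbf n_\theta\times\mathbf n_1$. The Bloch vector is $\mathbf r_0=(\langle\sigma_x\rangle_0,\langle\sigma_y\rangle_0,\langle\sigma_z\rangle_0)$, $\langle X\rangle_0=\langle\psi_0|X|\psi_0\rangle$. With $\mathcal H_l=i(\partial_lU^\dagger)U$, $l\in\{B,\theta\}$, the QFIM is $\mathcal Q_{ll'}=2\langle\{\mathcal H_l,\mathcal H_{l'}\}\rangle_0-4\langle\mathcal H_l\rangle_0\langle\mathcal H_{l'}\rangle_0$, the Uhlmann matrix is $\mathcal D_{ll'}=-2i\langle[\mathcal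 H_l,\mathcal H_{l'}]\rangle_0$, and the AI is $\mathcal R=\max\{|\mu|:\mu\text{ eigenvalue of }\boldsymbol{\mathcal Q}^{-1}\boldsymbol{\mathcal D}\}$ (defined when $\boldsymbol{\mathcal Q}$ is invertible). *)

From HB Require Import structures.
From mathcomp Require Import all_boot all_order all_algebra.
From mathcomp Require Import complex.
From mathcomp Require Import all_classical all_reals all_analysis.

Set Implicit Arguments.
Unset Strict Implicit.
Unset Printing Implicit Defensive.

Import Order.TTheory GRing.Theory Num.Theory.
Import numFieldNormedType.Exports.
Local Open Scope ring_scope.
Local Open Scope complex_scope.

Section QubitModel.
Variable R : realType.
Local Notation C := R[i].

Definition sigx : 'M[C]_2 := \matrix_(i < 2, j < 2) (if i == j then 0 else 1).
Definition sigy : 'M[C]_2 :=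
  \matrix_(i < 2, j < 2)
    (if i == j then 0 else if (i : nat) == 0%N then - 'i else 'i).
Definition sigz : 'M[C]_2 :=
  \matrix_(i < 2, j < 2)
    (if i == j then (if (i : nat) == 0%N then 1 else -1) else 0).

Definition Jx : 'M[C]_2 := (2^-1 : C) *: sigx.
Definition Jy : 'M[C]_2 := (2^-1 : C) *: sigy.
Definition Jz : 'M[C]_2 := (2^-1 : C) *: sigz.

Definition Ham (B th : R) : 'M[C]_2 :=
  (B%:C) *: ((cos th)%:C *: Jx + (sin th)%:C *: Jz).

Definition expm (A : 'M[C]_2) : 'M[C]_2 :=
  \matrix_(i < 2, j < 2)
    ((limn (fun n : nat => complex.Re ((\sum_(k < n) ((k`!)%:R)^-1 *: A ^+ k) i j)))
     +i* (limn (fun n : nat => complex.Im ((\sum_(k < n) ((k`!)%:R)^-1 *: A ^+ k) i j)))).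

Definition Uop (t B th : R) : 'M[C]_2 := expm ((- ('i * t%:C)) *: Ham B th).

Definition dagger (m n : nat) (M : 'M[C]_(m, n)) : 'M[C]_(n, m) :=
  \matrix_(i < n, j < m) (M j i)^*.

Definition dmx (f : R -> 'M[C]_2) (x : R) : 'M[C]_2 :=
  \matrix_(i < 2, j < 2)
    ((derive1 (fun y => complex.Re (f y i j)) x) +i* (derive1 (fun y => complex.Im (f y i j)) x)).

(* generators H_l = i (d_l U^dagger) U; index l = 0 is B, l = 1 is theta *)
Definition gen (t B th : R) (l : 'I_2) : 'M[C]_2 :=
  'i *: ((if (l : nat) == 0%N
          then dmx (fun b => dagger (Uop t b th)) B
          else dmx (fun a => dagger (Uop t B a)) th) *m Uop t B th).

Definition expect (psi : 'cV[C]_2) (X : 'M[C]_2) : C :=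
  (dagger psi *m X *m psi) 0 0.

Definition QFIM (t B th : R) (psi : 'cV[C]_2) : 'M[C]_2 :=
  \matrix_(l < 2, l' < 2)
    (2 * expect psi (gen t B th l *m gen t B th l' + gen t B th l' *m gen t B th l)
     - 4 * expect psi (gen t B th l) * expect psi (gen t B th l')).

Definition Uhlmann (t B th : R) (psi : 'cV[C]_2) : 'M[C]_2 :=
  \matrix_(l < 2, l' < 2)
    (- 2 * 'i *
       expect psi (gen t B th l *m gen t B th l' - gen t B th l' *m gen t B th l)).

Definition vec3 (a b c : R) : 'rV[R]_3 :=
  \row_(k < 3) (if (k : nat) == 0%N then a else if (k : nat) == 1%N then b else c).
Definition dot3 (u v : 'rV[R]_3) : R := \sum_(k < 3) u 0 k * v 0 k.
Definition cross3 (u v : 'rV[R]_3) : 'rV[R]_3 :=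
  vec3 (u 0 1 * v 0 2 - u 0 2 * v 0 1)
       (u 0 2 * v 0 0 - u 0 0 * v 0 2)
       (u 0 0 * v 0 1 - u 0 1 * v 0 0).

Definition n_theta (th : R) : 'rV[R]_3 := vec3 (cos th) 0 (sin th).
Definition n_1 (t B th : R) : 'rV[R]_3 :=
  vec3 (cos (B * t / 2) * sin th) (- sin (B * t / 2)) (- cos (B * t / 2) * cos th).
Definition n_2 (t B th : R) : 'rV[R]_3 := cross3 (n_theta th) (n_1 t B th).

(* Bloch vector r0 = (<sigma_x>_0, <sigma_y>_0, <sigma_z>_0) (real parts; these
   expectation values are real) *)
Definition bloch (psi : 'cV[C]_2) : 'rV[R]_3 :=
  vec3 (complex.Re (expect psi sigx)) (complex.Re (expect psi sigy)) (complex.Re (expect psi sigz)).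

(* asymptotic incompatibility: R(M) = max { |mu| : mu eigenvalue of M };
   [AI_eq M r] says this maximum equals r *)
Definition AI_eq (M : 'M[C]_2) (r : R) : Prop :=
  (exists mu : C, eigenvalue M mu /\ `|mu| = r%:C) /\
  (forall mu : C, eigenvalue M mu -> `|mu| <= r%:C).

End QubitModel.

From HB Require Import structures.
From mathcomp Require Import all_boot all_order all_algebra.
From mathcomp Require Import complex.
From mathcomp Require Import all_classical all_reals all_analysis.
From mathcomp Require Import ring.
Import Order.TTheory GRing.Theory Num.Theory.
Import numFieldNormedType.Exports.
Set Implicit Arguments.
Unset Strict Implicit.
Unset Printing Implicit Defensive.
Local Open Scope ring_scope.
Local Open Scope complex_scope.

(** With [K := -i n_theta.sigma] one has [-itH = (Bt/2) K] and [K^2 = -1], so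
    [U = cos(Bt/2) + sin(Bt/2) K].  Differentiating [U^dagger] then gives the
    generators [H_B = -t n_theta.J] and [H_theta = 2 sin(Bt/2) n_1.J].  For
    generators [a.J], [b.J] the product rule
    [(a.sigma)(b.sigma) = a.b + i (a x b).sigma] and the unit Bloch vector [r] of
    a pure state give [Q = [[a.a - (a.r)^2, a.b - (a.r)(b.r)], ...]] and
    [D = [[0, X], [-X, 0]]] with [X = (a x b).r]; Lagrange's identity turns
    [det Q] into [X^2 = det D], and [X = -2 t sin(Bt/2) n_2.r].  As [Q] is
    symmetric and [D] skew, [det (mu Q - D) = det Q (mu^2 + 1)], so the
    eigenvalues of [Q^-1 D] are [+i] and [-i]. *)

Ltac complex_ext := apply/eqP; rewrite eq_complex /=; apply/andP; split; apply/eqP.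

Ltac derive_ring :=
  apply: is_derive_eq; rewrite ?scaler0 ?(addr0, add0r) /GRing.scale /= ?mulr1; ring.

Section PauliAlgebra.
Variable R : realType.
Local Notation C := R[i].
Implicit Types (u v r : 'rV[R]_3).

Lemma row3_ind (P : 'rV[R]_3 -> Prop) : (forall x y z, P (vec3 x y z)) -> forall u, P u.
Proof.
move=> Pvec u; suff -> : u = vec3 (u 0 0) (u 0 1) (u 0 2) by [].
apply/matrixP => i [[|[|[|//]]] k]; rewrite !mxE /=;
  by congr (u _ _); apply/val_inj; rewrite /= ?ord1.
Qed.

Lemma dot3C u v : dot3 u v = dot3 v u.
Proof. by apply: eq_bigr => k _; rewrite mulrC. Qed.

Lemma dot3_cross3C u v r : dot3 (cross3 u v) r = - dot3 (cross3 v u) r.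
Proof.
elim/row3_ind: u => ? ? ?; elim/row3_ind: v => ? ? ?; elim/row3_ind: r => ? ? ?.
by rewrite /dot3 /cross3 ?(mxE, big_ord_recr, big_ord0) /=; ring.
Qed.

Lemma lagrange3_unit u v r : dot3 r r = 1 ->
  (dot3 u u - dot3 u r ^+ 2) * (dot3 v v - dot3 v r ^+ 2)
  - (dot3 u v - dot3 u r * dot3 v r) ^+ 2 = dot3 (cross3 u v) r ^+ 2.
Proof.
move=> r1.
have lagrange : (dot3 u u * dot3 r r - dot3 u r ^+ 2) * (dot3 v v * dot3 r r - dot3 v r ^+ 2)
    - (dot3 u v * dot3 r r - dot3 u r * dot3 v r) ^+ 2 =
    dot3 r r * dot3 (cross3 u v) r ^+ 2.
  clear r1; elim/row3_ind: u => ? ? ?; elim/row3_ind: v => ? ? ?; elim/row3_ind: r => ? ? ?.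
  by rewrite /dot3 /cross3 ?(mxE, big_ord_recr, big_ord0) /=; ring.
by rewrite r1 !mulr1 mul1r in lagrange.
Qed.

Definition spin u : 'M[C]_2 := (u 0 0)%:C *: Jx R + (u 0 1)%:C *: Jy R + (u 0 2)%:C *: Jz R.

(* Keeping halves real prevents [/=] from unfolding the complex inverse. *)
Lemma inv2C : (2^-1 : C) = (2^-1 : R)%:C.
Proof. by rewrite fmorphV rmorph_nat. Qed.

Lemma spinE u : spin u = \matrix_(i < 2, j < 2)
  if i == j then (if (i : nat) == 0%N then (u 0 2 / 2)%:C else (- (u 0 2 / 2))%:C)
  else (u 0 0 / 2) +i* (if (i : nat) == 0%N then - (u 0 1 / 2) else u 0 1 / 2).
Proof.
apply/matrixP => i j; rewrite /spin /Jx /Jy /Jz inv2C !mxE.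
by case: i => [[|[|//]] ?]; case: j => [[|[|//]] ?] /=; complex_ext; ring.
Qed.

Lemma spinZ k u : spin (k *: u) = k%:C *: spin u.
Proof. by rewrite /spin !mxE !scalerDr !scalerA -!rmorphM. Qed.

Lemma spin_mul u v :
  spin u *m spin v = (dot3 u v / 4)%:C *: 1 + ('i / 2) *: spin (cross3 u v).
Proof.
elim/row3_ind: u => ? ? ?; elim/row3_ind: v => ? ? ?.
rewrite !spinE inv2C; apply/matrixP => i j.
rewrite /dot3 /cross3 ?(mxE, big_ord_recr, big_ord0).
by case: i => [[|[|//]] ?]; case: j => [[|[|//]] ?] /=; complex_ext; field.
Qed.

Lemma cross3_self u : cross3 u u = 0.
Proof.
elim/row3_ind: u => ? ? ?; apply/matrixP => i [[|[|[|//]]] ?];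
  by rewrite /cross3 !mxE /=; ring.
Qed.

Lemma spin0 : spin 0 = 0.
Proof. by rewrite /spin !mxE !scale0r !addr0. Qed.

(* [rotgen u] is [-i u.sigma]. *)
Definition rotgen u : 'M[C]_2 := (-2 * 'i) *: spin u.

Lemma rotgen_mul u v : rotgen u *m rotgen v = (- dot3 u v)%:C *: 1 + rotgen (cross3 u v).
Proof.
rewrite /rotgen -scalemxAl -scalemxAr scalerA spin_mul scalerDr !scalerA.
by congr (_ *: _ + _ *: _); rewrite ?inv2C; complex_ext; field.
Qed.

Lemma rotgen_sqr u : dot3 u u = 1 -> rotgen u ^+ 2 = -1.
Proof.
move=> u1; rewrite expr2 -mulmxE rotgen_mul u1 cross3_self /rotgen spin0 scaler0.
by rewrite addr0 rmorphN1 scaleN1r.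
Qed.

End PauliAlgebra.

Lemma ord2_cases (i : 'I_2) : i = 0 \/ i = 1.
Proof. by case: i => [[|[|//]] ?]; [left | right]; apply/val_inj. Qed.

Lemma matrix2P (T : Type) (A B : 'M[T]_2) :
  A 0 0 = B 0 0 -> A 0 1 = B 0 1 -> A 1 0 = B 1 0 -> A 1 1 = B 1 1 -> A = B.
Proof.
move=> e00 e01 e10 e11; apply/matrixP => i j.
by case: (ord2_cases i) => ->; case: (ord2_cases j) => ->.
Qed.

Lemma det_mx2 (F : comNzRingType) (A : 'M[F]_2) : \det A = A 0 0 * A 1 1 - A 0 1 * A 1 0.
Proof.
rewrite (expand_det_row _ 0) !big_ord_recl big_ord0 /cofactor !det_mx11 !mxE /=.
rewrite expr0 expr1 mul1r mulN1r addr0 mulrN.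
by congr (A _ _ * A _ _ - A _ _ * A _ _); apply/val_inj.
Qed.

Section SymmetricSkew2.
Variable F : numDomainType.
Implicit Types (Q D : 'M[F]_2).

Lemma skew_mx2P D : D^T = - D -> [/\ D 0 0 = 0, D 1 1 = 0 & D 1 0 = - D 0 1].
Proof.
move=> /matrixP skewD.
have diag0 i : D i i = 0.
  by apply/eqP; rewrite -eqNr; have := skewD i i; rewrite !mxE => <-.
by split; rewrite ?diag0 //; have := skewD 0 1; rewrite !mxE.
Qed.

Lemma det_scale_sub_sym_skew Q D mu : Q^T = Q -> D^T = - D ->
  \det (mu *: Q - D) = mu ^+ 2 * \det Q + \det D.
Proof.
move=> /matrixP symQ /skew_mx2P [d00 d11 d10].
have q10 : Q 1 0 = Q 0 1 by have := symQ 0 1; rewrite !mxE.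
by rewrite !det_mx2 !mxE q10 d10 d00 d11; ring.
Qed.

Lemma skew_det_eq0 D : D^T = - D -> \det D = 0 -> D = 0.
Proof.
move=> /skew_mx2P [d00 d11 d10].
rewrite det_mx2 d10 d00 d11 mul0r mulrN opprK add0r => /eqP.
rewrite mulf_eq0 orbb => /eqP d01.
by apply: matrix2P; rewrite mxE ?d00 ?d10 ?d01 ?d11 ?oppr0.
Qed.

End SymmetricSkew2.

Lemma eigenvalue_det (F : fieldType) n (A : 'M[F]_n) a :
  eigenvalue A a = (\det (a%:M - A) == 0).
Proof.
rewrite eigenvalue_root_char /root /char_poly -horner_evalE -det_map_mx /=.
by congr (\det _ == 0); apply/matrixP => i j; rewrite !mxE horner_evalE !hornerE hornerMn hornerX.
Qed.

Lemma eigenvalue_invmx_mul (F : fieldType) n (Q D : 'M[F]_n) mu : Q \in unitmx ->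
  eigenvalue (invmx Q *m D) mu = (\det (mu *: Q - D) == 0).
Proof.
move=> unitQ; rewrite eigenvalue_det.
have -> : mu%:M - invmx Q *m D = invmx Q *m (mu *: Q - D).
  by rewrite mulmxBr -scalemxAr mulVmx // scalemx1.
rewrite det_mulmx det_inv mulf_eq0 invr_eq0.
by move: unitQ; rewrite unitmxE unitfE => /negbTE ->.
Qed.

Lemma normr_sqrN1 (F : numDomainType) (x : F) : x ^+ 2 = -1 -> `|x| = 1.
Proof.
move=> x2; have /eqP : `|x| ^+ 2 = 1 by rewrite -normrX x2 normrN normr1.
rewrite sqrf_eq1 => /orP [/eqP // | /eqP x1].
by move: (normr_ge0 x); rewrite x1 oppr_ge0 ler10.
Qed.

Lemma AI_eq_sym_skew (R : realType) (Q D : 'M[R[i]]_2) :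
  Q^T = Q -> D^T = - D -> \det D = \det Q -> Q \in unitmx ->
  AI_eq (invmx Q *m D) 1.
Proof.
move=> symQ skewD detDQ unitQ.
have eig mu : eigenvalue (invmx Q *m D) mu = (mu ^+ 2 == -1).
  rewrite eigenvalue_invmx_mul // det_scale_sub_sym_skew // detDQ.
  rewrite -[X in _ + X]mul1r -mulrDl mulf_eq0 addr_eq0.
  by move: unitQ; rewrite unitmxE unitfE => /negbTE ->; rewrite orbF.
rewrite /AI_eq rmorph1; split.
  by exists 'i; rewrite eig sqr_i eqxx (normr_sqrN1 (sqr_i R)).
by move=> mu; rewrite eig => /eqP /normr_sqrN1 ->.
Qed.

Section ComplexStructure.
Variable R : realType.
Local Notation C := R[i].
Local Notation Re := (@complex.Re R).
Local Notation Im := (@complex.Im R).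
Variable K : 'M[C]_2.
Hypothesis K2 : K ^+ 2 = -1.

Lemma mul_cplx_mx a b c d :
  (a%:C *: 1 + b%:C *: K) *m (c%:C *: 1 + d%:C *: K) =
  (a * c - b * d)%:C *: 1 + (a * d + b * c)%:C *: K.
Proof.
rewrite mulmxE mulrDl !mulrDr -!scalerAl -!scalerAr !mul1r !mulr1 -expr2 K2.
rewrite !scalerA !rmorphD rmorphN !rmorphM !scalerDl scaleNr scalerN.
by rewrite -!addrA; congr (_ + _); rewrite [RHS]addrC addrA.
Qed.

Lemma exprK_cplx k :
  K ^+ k = ((-1) ^+ k./2)%:C *: (if odd k then K else 1).
Proof.
have sgnK m : (-1 : 'M[C]_2) ^+ m = ((-1) ^+ m)%:C *: 1.
  elim: m => [|m IH]; first by rewrite !expr0 scale1r.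
  by rewrite !exprS IH !mulN1r rmorphN scaleNr.
have := odd_double_half k; case: (odd k) => /= hk; rewrite -{1}hk.
  by rewrite add1n exprS -muln2 mulnC exprM K2 sgnK -scalerAr mulr1.
by rewrite add0n -muln2 mulnC exprM K2 sgnK.
Qed.

Lemma exp_series_cplx ph n :
  \sum_(k < n) ((k`!)%:R)^-1 *: (ph%:C *: K) ^+ k =
  (series (cos_coeff ph) n)%:C *: 1 + (series (sin_coeff ph) n)%:C *: K.
Proof.
have term k : ((k`!)%:R)^-1 *: (ph%:C *: K) ^+ k =
    (cos_coeff ph k)%:C *: 1 + (sin_coeff ph k)%:C *: K.
  rewrite exprZn exprK_cplx /cos_coeff /sin_coeff /= -exprnP !scalerA.
  rewrite -(rmorph_nat (real_complex R)) -fmorphV -!rmorphXn -!rmorphM.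
  have := odd_double_half k; case: (boolP (odd k)) => ok hk /=.
    have -> : k.-1./2 = k./2 by rewrite -{1}hk /= ?add1n /= doubleK.
    by rewrite !mul0r scale0r add0r; congr (_%:C *: _); ring.
  by rewrite !mul0r scale0r addr0; congr (_%:C *: _); ring.
under eq_bigr => k _ do rewrite term.
rewrite big_split /= -!scaler_suml -!rmorph_sum.
by rewrite /series /= !big_mkord.
Qed.

Lemma expm_cplx ph : expm (ph%:C *: K) = (cos ph)%:C *: 1 + (sin ph)%:C *: K.
Proof.
pose c n := (series (cos_coeff ph) n)%:C; pose s n := (series (sin_coeff ph) n)%:C.
have lim_cs (a b : R) :
    limn (fun n => series (cos_coeff ph) n * a + series (sin_coeff ph) n * b) =
    cos ph * a + sin ph * b.
  apply: cvg_lim => //; apply: cvgD; apply: cvgMl; rewrite unlock.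
    exact: is_cvg_series_cos_coeff.
  exact: is_cvg_series_sin_coeff.
have lim_ReIm (a b : C) :
    limn (fun n => Re (c n * a + s n * b)) +i* limn (fun n => Im (c n * a + s n * b)) =
    (cos ph)%:C * a + (sin ph)%:C * b.
  case: a b => [a1 a2] [b1 b2].
  under eq_fun do rewrite /= !mul0r !subr0.
  under [X in _ +i* limn X]eq_fun do rewrite /= !mul0r !addr0.
  by rewrite !lim_cs; complex_ext; ring.
apply/matrixP => i j; rewrite !mxE.
under eq_fun do rewrite exp_series_cplx !mxE.
under [X in _ +i* limn X]eq_fun do rewrite exp_series_cplx !mxE.
exact: lim_ReIm.
Qed.

End ComplexStructure.

Section Derivative.
Variable R : realType.
Local Notation C := R[i].
Local Notation Re := (@complex.Re R).
Local Notation Im := (@complex.Im R).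

Lemma is_derive_lincomb3 (f g h : R -> R) (df dg dh a b c x : R) :
  is_derive x 1 f df -> is_derive x 1 g dg -> is_derive x 1 h dh ->
  is_derive x 1 (fun y => a * f y + b * g y + c * h y) (a * df + b * dg + c * dh).
Proof.
move=> Df Dg Dh.
exact: is_deriveD (is_deriveD (is_deriveZ a Df) (is_deriveZ b Dg)) (is_deriveZ c Dh).
Qed.

Lemma dmx_lincomb3 (F : R -> 'M[C]_2) (f g h : R -> R) (df dg dh x : R)
    (M N P : 'M[C]_2) :
  (forall y, F y = (f y)%:C *: M + (g y)%:C *: N + (h y)%:C *: P) ->
  is_derive x 1 f df -> is_derive x 1 g dg -> is_derive x 1 h dh ->
  dmx F x = df%:C *: M + dg%:C *: N + dh%:C *: P.
Proof.
move=> eF Df Dg Dh; apply/matrixP => i j; rewrite !mxE.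
have eRe : (fun y => Re (F y i j)) =
    fun y => Re (M i j) * f y + Re (N i j) * g y + Re (P i j) * h y.
  apply/funext => y; rewrite eF !mxE.
  by case: (M i j) (N i j) (P i j) => ? ? [? ?] [? ?] /=; ring.
have eIm : (fun y => Im (F y i j)) =
    fun y => Im (M i j) * f y + Im (N i j) * g y + Im (P i j) * h y.
  apply/funext => y; rewrite eF !mxE.
  by case: (M i j) (N i j) (P i j) => ? ? [? ?] [? ?] /=; ring.
have val (k : R -> R) dk : is_derive x 1 k dk -> derive1 k x = dk.
  by move=> Dk; rewrite derive1E derive_val.
rewrite eRe eIm !(val _ _ (is_derive_lincomb3 _ _ _ Df Dg Dh)).
by case: (M i j) (N i j) (P i j) => ? ? [? ?] [? ?] /=; complex_ext; ring.
Qed.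

End Derivative.

Section Dynamics.
Variable R : realType.
Implicit Types (t B th : R).

Lemma dot3_n_theta th : dot3 (n_theta th) (n_theta th) = 1.
Proof.
rewrite /dot3 /n_theta /vec3 ?(mxE, big_ord_recr, big_ord0) /=.
by rewrite mul0r add0r addr0 -!expr2 cos2Dsin2.
Qed.

Lemma Ham_spin B th : Ham B th = B%:C *: spin (n_theta th).
Proof. by rewrite /Ham /spin /n_theta /vec3 !mxE /= scale0r addr0. Qed.

Lemma Uop_cplx t B th :
  Uop t B th = (cos (B * t / 2))%:C *: 1 + (sin (B * t / 2))%:C *: rotgen (n_theta th).
Proof.
rewrite /Uop; have -> : - ('i * t%:C) *: Ham B th = (B * t / 2)%:C *: rotgen (n_theta th).
  by rewrite Ham_spin /rotgen !scalerA; congr (_ *: _); complex_ext; field.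
by rewrite expm_cplx // rotgen_sqr // dot3_n_theta.
Qed.

Lemma dagger_Uop t B th : dagger (Uop t B th) =
  (cos (B * t / 2))%:C *: 1 + (- sin (B * t / 2) * cos th)%:C *: rotgen (vec3 1 0 0)
  + (- sin (B * t / 2) * sin th)%:C *: rotgen (vec3 0 0 1).
Proof.
rewrite Uop_cplx /rotgen !spinE; apply/matrixP => i j; rewrite /dagger !mxE /=.
by case: i => [[|[|//]] ?]; case: j => [[|[|//]] ?] /=; complex_ext; ring.
Qed.

Lemma dmx_dagger_Uop_B t B th :
  dmx (fun b => dagger (Uop t b th)) B =
  (- (t / 2) * sin (B * t / 2))%:C *: 1
  + (- (t / 2) * cos (B * t / 2))%:C *: rotgen (n_theta th).
Proof.
have Df : is_derive B 1 (fun b => cos (b * t / 2)) (- sin (B * t / 2) * (t / 2)).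
  by derive_ring.
have Dg : is_derive B 1 (fun b => - sin (b * t / 2) * cos th)
                        (- cos (B * t / 2) * (t / 2) * cos th).
  by derive_ring.
have Dh : is_derive B 1 (fun b => - sin (b * t / 2) * sin th)
                        (- cos (B * t / 2) * (t / 2) * sin th).
  by derive_ring.
rewrite (dmx_lincomb3 (dagger_Uop t ^~ th) Df Dg Dh) /rotgen !spinE.
apply/matrixP => i j; rewrite !mxE /=.
by case: i => [[|[|//]] ?]; case: j => [[|[|//]] ?] /=; complex_ext; ring.
Qed.

Definition dn_theta th : 'rV[R]_3 := vec3 (- sin th) 0 (cos th).

Lemma dmx_dagger_Uop_theta t B th :
  dmx (fun a => dagger (Uop t B a)) th = (- sin (B * t / 2))%:C *: rotgen (dn_theta th).
Proof.
have Df : is_derive th 1 (fun _ => cos (B * t / 2)) 0 by exact: is_derive_cst.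
have Dg : is_derive th 1 (fun a => - sin (B * t / 2) * cos a) (sin (B * t / 2) * sin th).
  by derive_ring.
have Dh : is_derive th 1 (fun a => - sin (B * t / 2) * sin a) (- sin (B * t / 2) * cos th).
  by derive_ring.
rewrite (dmx_lincomb3 (dagger_Uop t B) Df Dg Dh) /rotgen !spinE.
apply/matrixP => i j; rewrite !mxE /=.
by case: i => [[|[|//]] ?]; case: j => [[|[|//]] ?] /=; complex_ext; ring.
Qed.

End Dynamics.

Section Generators.
Variables (R : realType) (t B th : R).
Local Notation s := (sin (B * t / 2)).
Local Notation c := (cos (B * t / 2)).

Lemma gen_B_spin : gen t B th 0 = spin (- t *: n_theta th).
Proof.
rewrite /gen /= dmx_dagger_Uop_B Uop_cplx mul_cplx_mx; last first.
  by rewrite rotgen_sqr // dot3_n_theta.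
have -> : - (t / 2) * s * c - - (t / 2) * c * s = 0 by ring.
have -> : - (t / 2) * s * s + - (t / 2) * c * c = - (t / 2).
  by transitivity (- (t / 2) * (c ^+ 2 + s ^+ 2)); [ring | rewrite cos2Dsin2 mulr1].
rewrite scale0r add0r /rotgen spinZ !scalerA; congr (_ *: _).
by complex_ext; field.
Qed.

Lemma dot3_dn_theta : dot3 (dn_theta th) (n_theta th) = 0.
Proof. by rewrite /dot3 /dn_theta /n_theta /vec3 ?(mxE, big_ord_recr, big_ord0) /=; ring. Qed.

Lemma cross3_dn_theta : cross3 (dn_theta th) (n_theta th) = vec3 0 1 0.
Proof.
apply/matrixP => i [[|[|[|//]]] ?]; rewrite /cross3 /dn_theta /n_theta /vec3 !mxE /=; try ring.
by transitivity (cos th ^+ 2 + sin th ^+ 2); [ring | rewrite cos2Dsin2].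
Qed.

Lemma gen_theta_spin : gen t B th 1 = spin ((2 * s) *: n_1 t B th).
Proof.
rewrite /gen /= dmx_dagger_Uop_theta Uop_cplx mulmxDr -!scalemxAl -!scalemxAr mulmx1.
rewrite spin_mul dot3_dn_theta cross3_dn_theta !spinE inv2C.
apply/matrixP => i j; rewrite /n_1 /dn_theta !mxE /=.
by case: i => [[|[|//]] ?]; case: j => [[|[|//]] ?] /=; complex_ext; field.
Qed.

End Generators.

Section Expectation.
Variable R : realType.
Local Notation C := R[i].
Implicit Types (psi : 'cV[C]_2) (X Y : 'M[C]_2) (u v : 'rV[R]_3).

Lemma col2_ind (P : 'cV[C]_2 -> Prop) :
  (forall p1 p2 q1 q2 : R, P (\col_i (if (i : nat) == 0%N then p1 +i* p2 else q1 +i* q2))) ->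
  forall psi, P psi.
Proof.
move=> Pcol psi.
suff -> : psi = \col_i (if (i : nat) == 0%N then psi 0 0 else psi 1 0).
  by case: (psi 0 0) (psi 1 0) => ? ? [? ?].
apply/matrixP => i j; rewrite !mxE (ord1 j).
by case: i => [[|[|//]] ?] /=; congr (psi _ _); apply/val_inj.
Qed.

Lemma expectD psi X Y : expect psi (X + Y) = expect psi X + expect psi Y.
Proof. by rewrite /expect mulmxDr mulmxDl mxE. Qed.

Lemma expectN psi X : expect psi (- X) = - expect psi X.
Proof. by rewrite /expect mulmxN mulNmx mxE. Qed.

Lemma expectZ psi a X : expect psi (a *: X) = a * expect psi X.
Proof. by rewrite /expect -scalemxAr -scalemxAl mxE. Qed.

Lemma expect_spin psi u : expect psi (spin u) = (dot3 u (bloch psi) / 2)%:C.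
Proof.
elim/row3_ind: u => ? ? ?; elim/col2_ind: psi => ? ? ? ?.
rewrite spinE /bloch /expect /dagger /dot3 /sigx /sigy /sigz.
rewrite ?(mxE, big_ord_recr, big_ord0) /=.
by complex_ext; field.
Qed.

Lemma expect_spin_mul psi u v :
  expect psi (spin u *m spin v) =
  (dot3 u v / 4)%:C * expect psi 1 + 'i * (dot3 (cross3 u v) (bloch psi) / 4)%:C.
Proof.
rewrite spin_mul expectD !expectZ expect_spin inv2C; congr (_ + _).
by complex_ext; field.
Qed.

Lemma bloch_unit psi : expect psi 1 = 1 -> dot3 (bloch psi) (bloch psi) = 1.
Proof.
elim/col2_ind: psi => p1 p2 q1 q2 /(congr1 (@complex.Re R)).
rewrite /bloch /expect /dagger /dot3 /sigx /sigy /sigz.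
rewrite ?(mxE, big_ord_recr, big_ord0) /= => norm1.
have {}norm1 : p1 ^+ 2 + p2 ^+ 2 + q1 ^+ 2 + q2 ^+ 2 = 1 by rewrite -[RHS]norm1; ring.
by transitivity ((p1 ^+ 2 + p2 ^+ 2 + q1 ^+ 2 + q2 ^+ 2) ^+ 2); [ring | rewrite norm1 expr1n].
Qed.

Lemma fisher_spin psi u v : expect psi 1 = 1 ->
  2 * expect psi (spin u *m spin v + spin v *m spin u)
  - 4 * expect psi (spin u) * expect psi (spin v) =
  (dot3 u v - dot3 u (bloch psi) * dot3 v (bloch psi))%:C.
Proof.
move=> pure; rewrite expectD !expect_spin_mul !expect_spin pure.
rewrite (dot3C v u) (dot3_cross3C v u).
by complex_ext; field.
Qed.

Lemma uhlmann_spin psi u v : expect psi 1 = 1 ->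
  - 2 * 'i * expect psi (spin u *m spin v - spin v *m spin u) =
  (dot3 (cross3 u v) (bloch psi))%:C.
Proof.
move=> pure; rewrite expectD expectN !expect_spin_mul pure.
rewrite (dot3C v u) (dot3_cross3C v u).
by complex_ext; field.
Qed.

End Expectation.

Section FisherAndUhlmann.
Variables (R : realType) (t B th : R) (psi : 'cV[R[i]]_2).
Local Notation s := (sin (B * t / 2)).
Local Notation r := (bloch psi).

Definition gen_vec (l : 'I_2) : 'rV[R]_3 :=
  if (l : nat) == 0%N then - t *: n_theta th else (2 * s) *: n_1 t B th.

Lemma gen_spin l : gen t B th l = spin (gen_vec l).
Proof. by case: (ord2_cases l) => ->; [exact: gen_B_spin | exact: gen_theta_spin]. Qed.

Lemma QFIM_sym : (QFIM t B th psi)^T = QFIM t B th psi.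
Proof.
apply/matrixP => l l'; rewrite !mxE.
by rewrite (addrC (gen t B th l' *m gen t B th l)) (mulrAC 4).
Qed.

Lemma Uhlmann_skew : (Uhlmann t B th psi)^T = - Uhlmann t B th psi.
Proof. by apply/matrixP => l l'; rewrite !mxE -opprB expectN mulrN. Qed.

Hypothesis pure : expect psi 1 = 1.

Lemma QFIM_spin : QFIM t B th psi = \matrix_(l, l')
  (dot3 (gen_vec l) (gen_vec l') - dot3 (gen_vec l) r * dot3 (gen_vec l') r)%:C.
Proof. by apply/matrixP => l l'; rewrite !mxE !gen_spin fisher_spin. Qed.

Lemma Uhlmann_spin : Uhlmann t B th psi = \matrix_(l, l')
  (dot3 (cross3 (gen_vec l) (gen_vec l')) r)%:C.
Proof. by apply/matrixP => l l'; rewrite !mxE !gen_spin uhlmann_spin. Qed.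

Lemma gen_vec_cross_sqr : dot3 (cross3 (gen_vec 0) (gen_vec 1)) r ^+ 2 =
  4 * t ^+ 2 * s ^+ 2 * dot3 (n_2 t B th) r ^+ 2.
Proof.
rewrite /gen_vec /=; elim/row3_ind: r => ? ? ?.
by rewrite /dot3 /cross3 /n_2 /n_1 /n_theta ?(mxE, big_ord_recr, big_ord0) /=; ring.
Qed.

Lemma det_QFIM :
  \det (QFIM t B th psi) = (4 * t ^+ 2 * s ^+ 2 * dot3 (n_2 t B th) r ^+ 2)%:C.
Proof.
rewrite QFIM_spin det_mx2 !mxE -!rmorphM -rmorphB -gen_vec_cross_sqr.
rewrite -lagrange3_unit; last exact: bloch_unit.
by rewrite (dot3C (gen_vec 1) (gen_vec 0)); ring.
Qed.

Lemma det_Uhlmann :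
  \det (Uhlmann t B th psi) = (4 * t ^+ 2 * s ^+ 2 * dot3 (n_2 t B th) r ^+ 2)%:C.
Proof.
rewrite Uhlmann_spin det_mx2 !mxE !cross3_self -gen_vec_cross_sqr dot3_cross3C.
have dot30 : dot3 0 r = 0 by rewrite /dot3 big1 // => k _; rewrite mxE mul0r.
by rewrite dot30 -!rmorphM -rmorphB; congr (_%:C); ring.
Qed.

End FisherAndUhlmann.

Theorem mainTheorem4 (R : realType) (t B th : R) (psi0 : 'cV[R[i]]_2)
  (hpure : (dagger psi0 *m psi0) 0 0 = 1) :
  let Q := QFIM t B th psi0 in
  let D := Uhlmann t B th psi0 in
  let rhs : R := 4 * t ^+ 2 * sin (B * t / 2) ^+ 2
                 * dot3 (n_2 t B th) (bloch psi0) ^+ 2 in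
  [/\ \det Q = rhs%:C,
      \det D = rhs%:C,
      t * sin (B * t / 2) != 0 -> (D = 0 <-> \det Q = 0)
    & Q \in unitmx -> AI_eq (invmx Q *m D) 1].
Proof.
move=> Q D rhs.
have pure : expect psi0 1 = 1 by rewrite /expect mulmx1.
have detQ : \det Q = rhs%:C := det_QFIM t B th pure.
have detD : \det D = rhs%:C := det_Uhlmann t B th pure.
(* The equivalence holds without the hypothesis [t sin(Bt/2) != 0]. *)
split => // [_ |]; first split => [D0 | detQ0].
- by rewrite detQ -detD D0 det0.
- by apply: skew_det_eq0; [exact: Uhlmann_skew | rewrite detD -detQ].
- by apply: AI_eq_sym_skew; [exact: QFIM_sym | exact: Uhlmann_skew | rewrite detD detQ].
Qed.
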